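(* Let $\mathcal{G}=(\mathcal{V},\mathcal{E},\rho)$ be a rooted weighted directed graph with edge weights $w_{ij}$ and set of trees $\mathcal{D}$. Let $r:\mathcal{D}\to\mathbb{R}^R$ and $s:\mathcal{D}\to\mathbb{R}^S$ be additively decomposable, $r(d)=\sum_{(i\to j)\in d}r_{ij}$ and $s(d)=\sum_{(i\to j)\in d}s_{ij}$ with $r_{ij}\in\mathbb{R}^R$, $s_{ij}\in\mathbb{R}^S$, where the $r_{ij}$ do not depend on the edge weights $w$. Let $t:\mathcal{D}\to\mathbb{R}^{R\times S}$ be $t(d)=r(d)\,s(d)^\top$ and $\bar{t}=\sum_{d\in\mathcal{D}}w(d)\,t(d)$. Then, with $\bar{r}=\sum_{d\in\mathcal{D}}w(d)\,r(d)$ regarded as a function of the edge weights, $$\bar{t}=\sum_{(i\to j)\in\mathcal{E}}\frac{\partial\bar{r}}{\partial w_{ij}}\,w_{ij}\,s_{ij}^\top,$$ and also $$\bar{t}=\sum_{(i\to j)\in\mathcal{E}}\Big(\bar{w}_{ij}\,r_{ij}\,s_{ij}^\top+\sum_{(k\to l)\in\mathcal{E}}\bar{w}_{ij,kl}\,r_{ij}\,s_{kl}^\top\Big).$$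
   Context: A rooted weighted directed graph $\mathcal{G}=(\mathcal{V},\mathcal{E},\rho)$ has node set $\mathcal{V}=\{1,\dots,N\}\cup\{\rho\}$ with designated root $\rho$; $\mathcal{E}$ is a set of edges $(i\to j)$ between distinct nodes, at most one edge per ordered pair, each carrying a weight $w_{ij}\in\mathbb{R}$; the root has no incoming edges. A tree $d$ of $\mathcal{G}$ is a set of $N$ edges containing no cycle, such that every non-root node has exactly one incoming edge and $\rho$ has at least one outgoing edge. $\mathcal{D}$ denotes the set of all trees (assumed nonempty). The weight of a tree is $w(d)=\prod_{(i\to j)\in d}w_{ij}$. For an edge $(i\to j)$, $\bar{w}_{ij}=\sum_{d\in\mathcal{D}:(i\to j)\in d}w(d)$. For distinct edges $(i\to j)\neq(k\to l)$, $\bar{w}_{ij,kl}=\sum_{d\in\mathcal{D}:(i\to j)\in d,(k\to l)\in d}w(d)$, and by convention $\bar{w}_{ij,ij}=0$. *)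

From HB Require Import structures.
From mathcomp Require Import all_boot all_order all_algebra.
From mathcomp Require Import all_classical all_reals all_analysis.
Set Implicit Arguments. Unset Strict Implicit. Unset Printing Implicit Defensive.
Import Order.TTheory GRing.Theory Num.Theory.
Local Open Scope ring_scope.

Section RootedGraph.
Variables (V : finType) (rho : V) (E : rel V).

Definition dedge (d : {set V * V}) : rel V := fun a b => (a, b) \in d.

Definition is_tree (d : {set V * V}) : bool :=
  [&& d \subset [set e | E e.1 e.2],
      #|d| == #|V|.-1,
      [forall x, [forall y, ((x, y) \in d) ==> ~~ connect (dedge d) y x]],
      [forall j, (j != rho) ==> (#|[set i | (i, j) \in d]| == 1%N)] &
      [exists j, (rho, j) \in d]].

Definition trees : {set {set V * V}} := [set d | is_tree d].

Variable R : realType.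

Definition tweight (w : V -> V -> R) (d : {set V * V}) : R :=
  \prod_(e in d) w e.1 e.2.

Definition dsum m n (f : V -> V -> 'M[R]_(m, n)) (d : {set V * V}) : 'M[R]_(m, n) :=
  \sum_(e in d) f e.1 e.2.

Definition rbar n (w : V -> V -> R) (r : V -> V -> 'cV[R]_n) : 'cV[R]_n :=
  \sum_(d in trees) tweight w d *: dsum r d.

Definition tbar m n (w : V -> V -> R) (r : V -> V -> 'cV[R]_m)
  (s : V -> V -> 'cV[R]_n) : 'M[R]_(m, n) :=
  \sum_(d in trees) tweight w d *: (dsum r d *m (dsum s d)^T).

Definition wbar1 (w : V -> V -> R) (i j : V) : R :=
  \sum_(d in trees | (i, j) \in d) tweight w d.

Definition wbar2 (w : V -> V -> R) (i j k l : V) : R :=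
  if (i, j) == (k, l) then 0
  else \sum_(d in trees | ((i, j) \in d) && ((k, l) \in d)) tweight w d.

Definition wupd (w : V -> V -> R) (i j : V) (x : R) : V -> V -> R :=
  fun a b => if (a == i) && (b == j) then x else w a b.

Definition drbar n (w : V -> V -> R) (r : V -> V -> 'cV[R]_n) (i j : V) : 'cV[R]_n :=
  \col_k derive1 (fun x : R => rbar (wupd w i j x) r k ord0) (w i j).

End RootedGraph.

(* Both identities come from expanding [t(d) = r(d) s(d)^T] over pairs of
   edges of [d] and exchanging the sum over trees with the sums over edges.
   For the first one, every tree weight [w(d)] has degree at most one in a
   single weight [w_ij], so [rbar] is affine in [w_ij] and
   [w_ij * d rbar / d w_ij] is the part of [rbar] carried by the trees
   containing [(i -> j)]. *)
From HB Require Import structures.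
From mathcomp Require Import all_boot all_order all_algebra.
From mathcomp Require Import all_classical all_reals all_analysis.
Import Order.TTheory GRing.Theory Num.Theory.
Local Open Scope ring_scope.
Set Implicit Arguments.
Unset Strict Implicit.
Import numFieldNormedType.Exports.

Lemma derive1_affine (R : numFieldType) (a b x : R) :
  derive1 (fun y : R => y * a + b) x = a.
Proof.
by rewrite derive1E deriveD // derive_cst addr0 deriveMr // derive_id mulr1.
Qed.

Lemma exchange_big_mem (T : finType) (M : nmodType) (F : {set T} -> T -> M)
    (P : pred T) (D : pred {set T}) :
  (forall d, D d -> {subset d <= P}) ->
  \sum_(e | P e) \sum_(d | D d && (e \in d)) F d e
    = \sum_(d | D d) \sum_(e in d) F d e.
Proof.
move=> DP; rewrite (exchange_big_dep D) /=; last by move=> e d _ /andP[].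
apply: eq_bigr => d Dd; apply: eq_bigl => e; rewrite Dd /=.
by case ed: (e \in d); rewrite ?andbT ?andbF //; exact: DP ed.
Qed.

Section TreeSums.
Variables (R : realType) (V : finType) (rho : V) (E : rel V).

Lemma tree_edges d : d \in trees rho E -> {subset d <= [pred e | E e.1 e.2]}.
Proof.
by rewrite inE => /and5P[/fintype.subsetP dE _ _ _ _] e /dE; rewrite inE.
Qed.

Lemma dsum_mul_trmx m n p (f : V -> V -> 'M[R]_(m, n))
    (g : V -> V -> 'M[R]_(p, n)) (d : {set V * V}) :
  dsum f d *m (dsum g d)^T
    = \sum_(e in d) \sum_(e' in d) f e.1 e.2 *m (g e'.1 e'.2)^T.
Proof.
rewrite /dsum mulmx_suml; apply: eq_bigr => e _.
by rewrite linear_sum mulmx_sumr.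
Qed.

Definition wpair (w : V -> V -> R) (e f : V * V) : R :=
  \sum_(d in trees rho E | (e \in d) && (f \in d)) tweight w d.

Lemma wpair_diag w i j : wpair w (i, j) (i, j) = wbar1 rho E w i j.
Proof. by apply: eq_bigl => d; rewrite andbb. Qed.

Lemma wpair_offdiag w e f :
  e != f -> wpair w e f = wbar2 rho E w e.1 e.2 f.1 f.2.
Proof. by case: e f => i j [k l] /negbTE ef; rewrite /wbar2 ef. Qed.

Lemma tbar_wpair (w : V -> V -> R) m n
    (r : V -> V -> 'cV[R]_m) (s : V -> V -> 'cV[R]_n) :
  tbar rho E w r s
    = \sum_(e | E e.1 e.2) \sum_(f | E f.1 f.2)
        wpair w e f *: (r e.1 e.2 *m (s f.1 f.2)^T).
Proof.
pose G d e f := tweight w d *: (r e.1 e.2 *m (s f.1 f.2)^T).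
transitivity (\sum_(d in trees rho E) \sum_(e in d) \sum_(f in d) G d e f).
  apply: eq_bigr => d _; rewrite dsum_mul_trmx scaler_sumr.
  by apply: eq_bigr => e _; rewrite scaler_sumr.
rewrite -(exchange_big_mem (fun d e => \sum_(f in d) G d e f) tree_edges).
apply: eq_bigr => e _.
have trees_e_edges d : (d \in trees rho E) && (e \in d) ->
    {subset d <= [pred f | E f.1 f.2]} by case/andP=> /tree_edges.
rewrite -(exchange_big_mem (fun d f => G d e f) trees_e_edges).
apply: eq_bigr => f _; rewrite scaler_suml.
by apply: eq_bigl => d; rewrite andbA.
Qed.

Lemma tbar_wbar (w : V -> V -> R) m n
    (r : V -> V -> 'cV[R]_m) (s : V -> V -> 'cV[R]_n) :
  tbar rho E w r s
    = \sum_(e | E e.1 e.2)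
        (wbar1 rho E w e.1 e.2 *: (r e.1 e.2 *m (s e.1 e.2)^T)
         + \sum_(f | E f.1 f.2)
             wbar2 rho E w e.1 e.2 f.1 f.2 *: (r e.1 e.2 *m (s f.1 f.2)^T)).
Proof.
rewrite tbar_wpair; apply: eq_bigr => -[i j] Eij /=.
rewrite (bigD1 (i, j)) //= [X in _ = _ + X](bigD1 (i, j)) //=.
rewrite wpair_diag /wbar2 eqxx scale0r add0r; congr (_ + _).
by apply: eq_bigr => f /andP[_ fij]; rewrite wpair_offdiag // eq_sym.
Qed.

Lemma wupd_id (w : V -> V -> R) i j : wupd w i j (w i j) = w.
Proof.
apply/funext => a; apply/funext => b; rewrite /wupd.
by case: eqP => [->|]; case: eqP => [->|].
Qed.

Lemma tweight_wupd (w : V -> V -> R) i j x d :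
  tweight (wupd w i j x) d
    = if (i, j) \in d then x * \prod_(e in d | e != (i, j)) w e.1 e.2
      else tweight w d.
Proof.
have wupdE e : e != (i, j) -> wupd w i j x e.1 e.2 = w e.1 e.2.
  by case: e => a b ne; rewrite /wupd -pair_eqE /= in ne *; rewrite (negbTE ne).
rewrite /tweight; case: ifP => [ijd | ijNd].
  rewrite (bigD1 (i, j)) //= {1}/wupd !eqxx; congr (_ * _).
  by apply: eq_bigr => e /andP[_ /wupdE].
by apply: eq_bigr => e ed; apply: wupdE; apply: contraFneq ijNd => <-.
Qed.

Lemma scale_drbar (w : V -> V -> R) n (r : V -> V -> 'cV[R]_n) i j :
  w i j *: drbar rho E w r i j
    = \sum_(d in trees rho E | (i, j) \in d) tweight w d *: dsum r d.
Proof.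
pose P (d : {set V * V}) := \prod_(e in d | e != (i, j)) w e.1 e.2.
pose A := \sum_(d in trees rho E | (i, j) \in d) P d *: dsum r d.
pose B := \sum_(d in trees rho E | (i, j) \notin d) tweight w d *: dsum r d.
have rbar_affine x : rbar rho E (wupd w i j x) r = x *: A + B.
  rewrite /rbar (bigID (fun d : {set V * V} => (i, j) \in d)) /= scaler_sumr.
  congr (_ + _).
    by apply: eq_bigr => d /andP[_ ijd]; rewrite tweight_wupd ijd scalerA.
  by apply: eq_bigr => d /andP[_ /negbTE ijNd]; rewrite tweight_wupd ijNd.
have -> : drbar rho E w r i j = A.
  apply/matrixP => k z; rewrite !mxE (ord1 z).
  under eq_fun do rewrite rbar_affine !mxE.
  by rewrite derive1_affine.
rewrite /A scaler_sumr; apply: eq_bigr => d /andP[_ ijd].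
by rewrite scalerA -[in RHS](wupd_id w i j) tweight_wupd ijd.
Qed.

Lemma tbar_drbar (w : V -> V -> R) m n
    (r : V -> V -> 'cV[R]_m) (s : V -> V -> 'cV[R]_n) :
  tbar rho E w r s
    = \sum_(e | E e.1 e.2)
        w e.1 e.2 *: (drbar rho E w r e.1 e.2 *m (s e.1 e.2)^T).
Proof.
rewrite /tbar.
under eq_bigr => d _ do
  rewrite [X in X^T]/dsum linear_sum mulmx_sumr scaler_sumr.
rewrite -(exchange_big_mem
  (fun d e => tweight w d *: (dsum r d *m (s e.1 e.2)^T)) tree_edges).
apply: eq_bigr => -[i j] _ /=.
rewrite [RHS]scalemxAl scale_drbar mulmx_suml; apply: eq_bigr => d _.
by rewrite scalemxAl.
Qed.

End TreeSums.

Theorem proposition7 (R : realType) (V : finType) (rho : V) (E : rel V)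
    (w : V -> V -> R) (nR nS : nat)
    (r : V -> V -> 'cV[R]_nR) (s : V -> V -> 'cV[R]_nS)
    (Hnoloop : forall i, ~~ E i i)
    (Hroot : forall i, ~~ E i rho)
    (Hne : (0 < #|trees rho E|)%N) :
  tbar rho E w r s
    = \sum_(e : V * V | E e.1 e.2)
        (w e.1 e.2 *: (drbar rho E w r e.1 e.2 *m (s e.1 e.2)^T))
  /\
  tbar rho E w r s
    = \sum_(e : V * V | E e.1 e.2)
        (wbar1 rho E w e.1 e.2 *: (r e.1 e.2 *m (s e.1 e.2)^T)
         + \sum_(f : V * V | E f.1 f.2)
             wbar2 rho E w e.1 e.2 f.1 f.2 *: (r e.1 e.2 *m (s f.1 f.2)^T)).
Proof. by split; [exact: tbar_drbar | exact: tbar_wbar]. Qed.
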